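(* Let $\alpha>0$ and consider the framed curvature flow with $\theta$-velocity $\upsilon_\theta=\alpha\,\partial_s^2\theta$ (i.e. the extended system below with $\beta=0$ and $f_4\equiv0$). Assume $|\theta_0(u)|<\pi/2$ for all $u\in S^1$. Then any solution $\{(\Gamma_t,\theta_t)\}_{t\in[0,\underline t]}$ satisfies $|\theta(t,u)|<\pi/2$ for all $(t,u)\in[0,\underline t]\times S^1$, and the extended system remains parabolic (i.e. $\cos\theta>0$ throughout).
   Context: $S^1=\mathbb{R}/2\pi\mathbb{Z}$; closed curves $\Gamma_t$ parametrized by $\gamma(t,\cdot):S^1\to\mathbb{R}^3$, $g=\|\partial_u\gamma\|$, $\partial_s=g^{-1}\partial_u$; Frenet frame $T,N,B$, curvature $\kappa$, torsion $\tau$. For an angle function $\theta$, $\nu_\theta=\cos\theta\,N+\sin\theta\,B$. Framed curvature flow: $\partial_t\gamma=\kappa\nu_\theta$ ($=\cos\theta\,\partial_s^2\gamma+\sin\theta\,\partial_s\gamma\times\partial_s^2\gamma$), $\partial_t\theta=\upsilon_\theta$, $\gamma(0)=\gamma_0$, $\theta(0)=\theta_0$. Extended system: with $\hat\gamma=(\gamma_1,\gamma_2,\gamma_3,\theta)$, $\partial_t\hat\gamma=\hat{\mathcal A}\,\partial_s^2\hat\gamma+f(\partial_s\hat\gamma,\hat\gamma)$, where $\hat{\mathcal A}=\begin{bmatrix}\mathcal A&0\\ \beta^T&\alpha\end{bmatrix}$, $\mathcal A=\cos\theta\,\mathbb I+\sin\theta\,[T]_\times$ ($[T]_\times$ the cross-product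 matrix of $T$), $\alpha>0$, $\beta\in\mathbb{R}^3$, so that $\upsilon_\theta=\alpha\partial_s^2\theta+\kappa\langle\beta,N\rangle+f_4(\partial_s\hat\gamma,\hat\gamma)$. The eigenvalues of $\hat{\mathcal A}$ are $\alpha,\cos\theta,e^{\pm i\theta}$; parabolicity requires $\alpha>0$ and $\cos\theta>0$. *)

From Stdlib Require Import Reals.
From Coquelicot Require Import Coquelicot.
Open Scope R_scope.

Definition vec3 := (R * R * R)%type.
Definition c1 (v : vec3) : R := fst (fst v).
Definition c2 (v : vec3) : R := snd (fst v).
Definition c3 (v : vec3) : R := snd v.

(* A time-dependent closed curve / function on S^1 = R/2piZ is represented by a
   function of (t,u) in R x R which is 2*PI-periodic in u. *)
Definition periodic_u {X : Type} (f : R -> R -> X) : Prop :=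
  forall t u, f t (u + 2 * PI) = f t u.

Definition comp1 (gam : R -> R -> vec3) : R -> R -> R := fun t u => c1 (gam t u).
Definition comp2 (gam : R -> R -> vec3) : R -> R -> R := fun t u => c2 (gam t u).
Definition comp3 (gam : R -> R -> vec3) : R -> R -> R := fun t u => c3 (gam t u).

Definition du (f : R -> R -> R) (t u : R) : R := Derive (f t) u.

Definition speed (gam : R -> R -> vec3) (t u : R) : R :=
  sqrt ((du (comp1 gam) t u) ^ 2 + (du (comp2 gam) t u) ^ 2 + (du (comp3 gam) t u) ^ 2).

Definition ds (gam : R -> R -> vec3) (f : R -> R -> R) : R -> R -> R :=
  fun t u => du f t u / speed gam t u.
Definition ds2 (gam : R -> R -> vec3) (f : R -> R -> R) : R -> R -> R :=
  ds gam (ds gam f).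

Definition reg2_u (gam : R -> R -> vec3) (f : R -> R -> R) (t u : R) : Prop :=
  ex_derive (f t) u /\
  ex_derive (fun u' => Derive (f t) u') u /\
  ex_derive (fun u' => ds gam f t u') u.

(* framed curvature velocity kappa nu_theta
     = cos theta d_s^2 gamma + sin theta (d_s gamma x d_s^2 gamma), componentwise *)
Definition flow_vel1 (gam : R -> R -> vec3) (th : R -> R -> R) (t u : R) : R :=
  let T1 := ds gam (comp1 gam) t u in
  let T2 := ds gam (comp2 gam) t u in
  let T3 := ds gam (comp3 gam) t u in
  let K1 := ds2 gam (comp1 gam) t u in
  let K2 := ds2 gam (comp2 gam) t u in
  let K3 := ds2 gam (comp3 gam) t u in
  cos (th t u) * K1 + sin (th t u) * (T2 * K3 - T3 * K2).
Definition flow_vel2 (gam : R -> R -> vec3) (th : R -> R -> R) (t u : R) : R :=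
  let T1 := ds gam (comp1 gam) t u in
  let T2 := ds gam (comp2 gam) t u in
  let T3 := ds gam (comp3 gam) t u in
  let K1 := ds2 gam (comp1 gam) t u in
  let K2 := ds2 gam (comp2 gam) t u in
  let K3 := ds2 gam (comp3 gam) t u in
  cos (th t u) * K2 + sin (th t u) * (T3 * K1 - T1 * K3).
Definition flow_vel3 (gam : R -> R -> vec3) (th : R -> R -> R) (t u : R) : R :=
  let T1 := ds gam (comp1 gam) t u in
  let T2 := ds gam (comp2 gam) t u in
  let T3 := ds gam (comp3 gam) t u in
  let K1 := ds2 gam (comp1 gam) t u in
  let K2 := ds2 gam (comp2 gam) t u in
  let K3 := ds2 gam (comp3 gam) t u in
  cos (th t u) * K3 + sin (th t u) * (T1 * K2 - T2 * K1).

Definition cont_on_slab (T : R) (f : R -> R -> R) : Prop :=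
  continuous_on (fun p : R * R => 0 <= fst p <= T) (fun p : R * R => f (fst p) (snd p)).

Definition framed_flow_solution (alpha T : R) (gam0 : R -> vec3) (th0 : R -> R)
    (gam : R -> R -> vec3) (th : R -> R -> R) : Prop :=
  periodic_u gam /\ periodic_u th /\
  (forall u, gam 0 u = gam0 u) /\ (forall u, th 0 u = th0 u) /\
  cont_on_slab T (comp1 gam) /\ cont_on_slab T (comp2 gam) /\
  cont_on_slab T (comp3 gam) /\ cont_on_slab T th /\
  (forall t u, 0 <= t <= T -> 0 < speed gam t u) /\
  (forall t u, 0 < t < T ->
     reg2_u gam (comp1 gam) t u /\ reg2_u gam (comp2 gam) t u /\
     reg2_u gam (comp3 gam) t u /\ reg2_u gam th t u) /\
  (forall t u, 0 < t < T ->
     is_derive (fun s => comp1 gam s u) t (flow_vel1 gam th t u) /\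
     is_derive (fun s => comp2 gam s u) t (flow_vel2 gam th t u) /\
     is_derive (fun s => comp3 gam s u) t (flow_vel3 gam th t u) /\
     is_derive (fun s => th s u) t (alpha * ds2 gam th t u)).

(** The angle θ obeys the linear equation ∂_t θ = α ∂_s² θ, decoupled from the
    curve except through the speed, so the weak maximum principle applies: the
    extreme values of θ(t, ·) over S¹ can never leave the range of θ₀, which by
    compactness lies strictly inside (-π/2, π/2).  The maximum principle itself is
    proved for w = v - ε t: at the first time w reaches max v₀ + ε, the point is a
    spatial maximum, so ∂_s² v ≤ 0 there, whereas w increased up to that time, so
    ∂_t v ≥ ε > 0. *)
From Stdlib Require Import Reals Lra Psatz ZArith Classical ClassicalEpsilon.
From Coquelicot Require Import Coquelicot.
Open Scope R_scope.

Lemma is_derive_pos_sign (f : R -> R) (x l : R) : is_derive f x l -> 0 < l ->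
  exists d, 0 < d /\ forall y, y <> x -> Rabs (y - x) < d -> 0 < (f y - f x) * (y - x).
Proof.
  intros Hf Hl. apply is_derive_Reals in Hf.
  destruct (Hf l Hl) as [d Hd]. exists d; split; [apply cond_pos|].
  intros y Hyx Hy.
  specialize (Hd (y - x) ltac:(lra) Hy). replace (x + (y - x)) with y in Hd by ring.
  apply Rabs_def2 in Hd.
  replace ((f y - f x) * (y - x)) with ((f y - f x) / (y - x) * (y - x) ^ 2) by (field; lra).
  apply Rmult_lt_0_compat; [lra | apply pow2_gt_0; lra].
Qed.

Lemma is_derive_nonneg_of_left_max (f : R -> R) (x l d : R) : is_derive f x l -> 0 < d ->
  (forall y, x - d < y < x -> f y <= f x) -> 0 <= l.
Proof.
  intros Hf Hd Hmax. apply Rnot_lt_le; intro Hl.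
  destruct (is_derive_pos_sign (fun y => - f y) x (- l)) as [e [He Hsign]];
    [exact (is_derive_opp f x l Hf) | lra |].
  pose proof (Rmin_l d e); pose proof (Rmin_r d e); pose proof (Rmin_pos d e Hd He).
  set (y := x - Rmin d e / 2).
  specialize (Hsign y ltac:(unfold y; lra) ltac:(unfold y; rewrite Rabs_left; lra)).
  specialize (Hmax y ltac:(unfold y; lra)).
  unfold y in *; nra.
Qed.

Lemma is_derive_nonpos_of_right_max (f : R -> R) (x l d : R) : is_derive f x l -> 0 < d ->
  (forall y, x < y < x + d -> f y <= f x) -> l <= 0.
Proof.
  intros Hf Hd Hmax. apply Rnot_lt_le; intro Hl.
  destruct (is_derive_pos_sign f x l Hf Hl) as [e [He Hsign]].
  pose proof (Rmin_l d e); pose proof (Rmin_r d e); pose proof (Rmin_pos d e Hd He).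
  set (y := x + Rmin d e / 2).
  specialize (Hsign y ltac:(unfold y; lra) ltac:(unfold y; rewrite Rabs_right; lra)).
  specialize (Hmax y ltac:(unfold y; lra)).
  unfold y in *; nra.
Qed.

Lemma is_derive_eq0_of_local_max (f : R -> R) (x l d : R) : is_derive f x l -> 0 < d ->
  (forall y, Rabs (y - x) < d -> f y <= f x) -> l = 0.
Proof.
  intros Hf Hd Hmax.
  assert (0 <= l).
  { apply (is_derive_nonneg_of_left_max f x l d Hf Hd).
    intros y Hy. apply Hmax. rewrite Rabs_left; lra. }
  assert (l <= 0).
  { apply (is_derive_nonpos_of_right_max f x l d Hf Hd).
    intros y Hy. apply Hmax. rewrite Rabs_right; lra. }
  lra.
Qed.

(* At a maximum f' = 0, so f'/g would be positive just to the right of x if its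
   derivative were positive, making f increase there. *)
Lemma Derive_flux_nonpos_of_local_max (f g : R -> R) (x d : R) : 0 < d ->
  (forall y, ex_derive f y) -> (forall y, 0 < g y) ->
  ex_derive (fun y => Derive f y / g y) x ->
  (forall y, Rabs (y - x) < d -> f y <= f x) ->
  Derive (fun y => Derive f y / g y) x <= 0.
Proof.
  intros Hd Hf Hg Hq Hmax.
  set (q := fun y => Derive f y / g y).
  assert (Hq0 : q x = 0).
  { unfold q. rewrite (is_derive_eq0_of_local_max f x _ d (Derive_correct _ _ (Hf x)) Hd Hmax).
    unfold Rdiv; ring. }
  apply Rnot_lt_le; intro Hpos.
  destruct (is_derive_pos_sign q x _ (Derive_correct _ _ Hq) Hpos) as [e [He Hsign]].
  pose proof (Rmin_l d e); pose proof (Rmin_r d e); pose proof (Rmin_pos d e Hd He).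
  set (r := Rmin d e / 2).
  assert (Hincr : forall y, x < y <= x + r -> 0 < Derive f y).
  { intros y Hy.
    specialize (Hsign y ltac:(lra) ltac:(rewrite Rabs_right; unfold r in *; lra)).
    rewrite Hq0 in Hsign. unfold q in Hsign.
    assert (0 < Derive f y / g y) by nra.
    replace (Derive f y) with (Derive f y / g y * g y) by (field; specialize (Hg y); lra).
    apply Rmult_lt_0_compat; [lra | apply Hg]. }
  destruct (MVT_cor2 f (Derive f) x (x + r)) as [c [Hc Hcr]];
    [unfold r; lra | intros c _; apply is_derive_Reals, Derive_correct, Hf |].
  specialize (Hincr c ltac:(lra)).
  specialize (Hmax (x + r) ltac:(rewrite Rabs_right; unfold r in *; lra)).
  unfold r in *; nra.
Qed.

Lemma ex_inf (E : R -> Prop) b x0 : E x0 -> (forall x, E x -> b <= x) ->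
  exists l, (forall x, E x -> l <= x) /\ (forall y, (forall x, E x -> y <= x) -> y <= l).
Proof.
  intros Hx0 Hb.
  destruct (completeness (fun x => E (- x))) as [l [Hub Hlub]].
  - exists (- b). intros x Hx. specialize (Hb _ Hx). lra.
  - exists (- x0). rewrite Ropp_involutive. exact Hx0.
  - exists (- l). split.
    + intros x Hx. assert (- x <= l) by (apply Hub; rewrite Ropp_involutive; exact Hx). lra.
    + intros y Hy. assert (l <= - y); [|lra].
      apply Hlub. intros x Hx. specialize (Hy _ Hx). lra.
Qed.

Lemma periodic_u_shift_nat {X : Type} (f : R -> R -> X) : periodic_u f ->
  forall n t u, f t (u + INR n * (2 * PI)) = f t u.
Proof.
  intros Hper n; induction n as [|n IH]; intros t u.
  - simpl. f_equal. ring.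
  - rewrite S_INR.
    replace (u + (INR n + 1) * (2 * PI)) with (u + INR n * (2 * PI) + 2 * PI) by ring.
    rewrite Hper. apply IH.
Qed.

Lemma periodic_u_reduce {X : Type} (f : R -> R -> X) : periodic_u f ->
  forall t u, exists u', 0 <= u' <= 2 * PI /\ f t u = f t u'.
Proof.
  intros Hper t u.
  pose proof PI_RGT_0.
  set (z := Int_part (u / (2 * PI))).
  destruct (base_Int_part (u / (2 * PI))) as [B1 B2]. fold z in B1, B2.
  exists (u - IZR z * (2 * PI)). split.
  - assert (u = u / (2 * PI) * (2 * PI)) by (field; lra). split; nra.
  - destruct (Z_le_gt_dec 0 z) as [Hz|Hz].
    + rewrite <- (Z2Nat.id z Hz), <- INR_IZR_INZ.
      rewrite <- (periodic_u_shift_nat f Hper (Z.to_nat z) t (u - INR (Z.to_nat z) * (2 * PI))).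
      f_equal. ring.
    + replace (IZR z) with (- INR (Z.to_nat (- z))).
      * replace (u - - INR (Z.to_nat (- z)) * (2 * PI))
          with (u + INR (Z.to_nat (- z)) * (2 * PI)) by ring.
        symmetry. apply (periodic_u_shift_nat f Hper).
      * rewrite INR_IZR_INZ, Z2Nat.id by lia. rewrite opp_IZR. ring.
Qed.

Definition slab_continuous (T : R) (f : R -> R -> R) : Prop :=
  forall t u, 0 <= t <= T -> forall e, 0 < e -> exists d, 0 < d /\
    forall t' u', 0 <= t' <= T -> Rabs (t' - t) < d -> Rabs (u' - u) < d ->
      Rabs (f t' u' - f t u) < e.

Lemma cont_on_slab_slab_continuous T f : cont_on_slab T f -> slab_continuous T f.
Proof.
  intros Hf t u Ht e He.
  assert (Hball : locally (f t u) (fun y => Rabs (y - f t u) < e))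
    by (exists (mkposreal e He); intros y Hy; exact Hy).
  destruct (Hf (t, u) Ht _ Hball) as [d Hd].
  exists d. split; [apply cond_pos|].
  intros t' u' Ht' Htd Hud. apply (Hd (t', u')); [split; assumption | exact Ht'].
Qed.

Lemma slab_continuous_opp T f : slab_continuous T f -> slab_continuous T (fun t u => - f t u).
Proof.
  intros Hf t u Ht e He. destruct (Hf t u Ht e He) as [d [Hd Hfd]].
  exists d. split; [exact Hd|]. intros t' u' Ht' Htd Hud.
  replace (- f t' u' - - f t u) with (- (f t' u' - f t u)) by ring.
  rewrite Rabs_Ropp. exact (Hfd t' u' Ht' Htd Hud).
Qed.

Lemma slab_continuous_sub_linear T f k :
  slab_continuous T f -> slab_continuous T (fun t u => f t u - k * t).
Proof.
  intros Hf t u Ht e He.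
  destruct (Hf t u Ht (e / 2) ltac:(lra)) as [d [Hd Hfd]].
  pose proof (Rabs_pos k).
  set (r := e / (2 * (Rabs k + 1))).
  assert (Hr : 0 < r) by (apply Rdiv_lt_0_compat; lra).
  assert (Hkr : Rabs k * r < e / 2).
  { apply Rmult_lt_reg_r with (2 * (Rabs k + 1)); [lra|]. unfold r. field_simplify; lra. }
  exists (Rmin d r). split; [apply Rmin_pos; lra|].
  intros t' u' Ht' Htd Hud.
  pose proof (Rmin_l d r); pose proof (Rmin_r d r).
  specialize (Hfd t' u' Ht' ltac:(lra) ltac:(lra)).
  assert (Rabs (k * t' - k * t) <= Rabs k * r).
  { replace (k * t' - k * t) with (k * (t' - t)) by ring.
    rewrite Rabs_mult. apply Rmult_le_compat_l; lra. }
  replace (f t' u' - k * t' - (f t u - k * t)) with ((f t' u' - f t u) - (k * t' - k * t)) by ring.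
  eapply Rle_lt_trans; [apply Rabs_triang|]. rewrite Rabs_Ropp. lra.
Qed.

Lemma slab_continuous_slice T f t : 0 <= t <= T -> slab_continuous T f ->
  forall u, continuity_pt (f t) u.
Proof.
  intros Ht Hf u e He. destruct (Hf t u Ht e He) as [d [Hd Hfd]].
  exists d. split; [exact Hd|]. intros u' [_ Hu']. simpl in *. unfold R_dist in *.
  apply Hfd; [exact Ht | rewrite Rminus_diag, Rabs_R0; exact Hd | exact Hu'].
Qed.

Lemma slab_continuous_left_le T f s u c : slab_continuous T f -> 0 < s <= T ->
  (forall t, 0 <= t < s -> f t u <= c) -> f s u <= c.
Proof.
  intros Hf Hs Hbelow. apply Rnot_lt_le; intro Hc.
  destruct (Hf s u ltac:(lra) (f s u - c) ltac:(lra)) as [d [Hd Hfd]].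
  pose proof (Rmin_l d s); pose proof (Rmin_r d s); pose proof (Rmin_pos d s Hd ltac:(lra)).
  set (t := s - Rmin d s / 2).
  specialize (Hfd t u ltac:(unfold t; lra) ltac:(unfold t; rewrite Rabs_left; lra)).
  rewrite Rminus_diag, Rabs_R0 in Hfd. apply Rabs_def2 in Hfd; [|exact Hd].
  specialize (Hbelow t ltac:(unfold t; lra)). lra.
Qed.

(* The uniform time window comes from the Lebesgue number lemma on [a, b]. *)
Lemma slab_continuous_tube T f s a b c : slab_continuous T f -> 0 <= s <= T ->
  (forall u, a <= u <= b -> f s u < c) ->
  exists d, 0 < d /\ forall t u, 0 <= t <= T -> Rabs (t - s) < d -> a <= u <= b -> f t u < c.
Proof.
  intros Hf Hs Hslice.
  assert (Hloc : forall u, exists del : posreal, a <= u <= b ->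
     forall t' u', 0 <= t' <= T -> Rabs (t' - s) < del -> Rabs (u' - u) < del -> f t' u' < c).
  { intro u. destruct (classic (a <= u <= b)) as [Hu|Hu].
    - destruct (Hf s u Hs (c - f s u) ltac:(specialize (Hslice u Hu); lra)) as [d [Hd Hfd]].
      exists (mkposreal d Hd). intros _ t' u' Ht' Htd Hud.
      specialize (Hfd t' u' Ht' Htd Hud). apply Rabs_def2 in Hfd. lra.
    - exists (mkposreal 1 Rlt_0_1). intro; contradiction. }
  destruct (choice _ Hloc) as [delta Hdelta].
  destruct (compactness_value_1d a b delta) as [d Hd].
  exists d. split; [apply cond_pos|].
  intros t u Ht Hts Hu. apply NNPP; intro Hnot.
  apply (Hd u Hu). intros [u0 [Hu0 [Hud Hd0]]].
  apply Hnot, (Hdelta u0 Hu0 t u Ht); lra.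
Qed.

Lemma periodic_slice_bounds T f t : periodic_u f -> slab_continuous T f -> 0 <= t <= T ->
  exists um uM, forall u, f t um <= f t u <= f t uM.
Proof.
  intros Hper Hf Ht. pose proof PI_RGT_0.
  assert (Hcont : forall u, 0 <= u <= 2 * PI -> continuity_pt (f t) u)
    by (intros u _; exact (slab_continuous_slice T f t Ht Hf u)).
  destruct (continuity_ab_min (f t) 0 (2 * PI) ltac:(lra) Hcont) as [um [Hum _]].
  destruct (continuity_ab_maj (f t) 0 (2 * PI) ltac:(lra) Hcont) as [uM [HuM _]].
  exists um, uM. intro u.
  destruct (periodic_u_reduce f Hper t u) as [u' [Hu' ->]].
  split; [apply Hum | apply HuM]; exact Hu'.
Qed.

Lemma slab_first_hitting T f c t0 u0 : periodic_u f -> slab_continuous T f ->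
  (forall u, f 0 u < c) -> 0 <= t0 < T -> c <= f t0 u0 ->
  exists ts us, 0 < ts < T /\ c <= f ts us /\ (forall u, f ts u <= c) /\
    (forall t u, 0 <= t < ts -> f t u < c).
Proof.
  intros Hper Hf H0 Ht0 Hhit. pose proof PI_RGT_0.
  set (E := fun t => 0 <= t < T /\ exists u, c <= f t u).
  destruct (ex_inf E 0 t0) as [ts [Hlb Hglb]];
    [split; [lra | exists u0; exact Hhit] | intros x [Hx _]; lra |].
  assert (Hts0 : 0 <= ts) by (apply Hglb; intros x [Hx _]; lra).
  assert (Hts : ts <= t0) by (apply Hlb; split; [lra | exists u0; exact Hhit]).
  assert (Hbelow : forall t u, 0 <= t < ts -> f t u < c).
  { intros t u Ht. apply Rnot_le_lt; intro Hc.
    assert (ts <= t) by (apply Hlb; split; [lra | exists u; exact Hc]). lra. }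
  assert (Hattained : exists us, c <= f ts us).
  { apply NNPP; intro Hno.
    assert (Hslice : forall u, 0 <= u <= 2 * PI -> f ts u < c)
      by (intros u _; apply Rnot_le_lt; intro Hc; apply Hno; exists u; exact Hc).
    destruct (slab_continuous_tube T f ts 0 (2 * PI) c Hf ltac:(lra) Hslice) as [d [Hd Htube]].
    assert (ts + d / 2 <= ts); [|lra].
    apply Hglb. intros t [Ht [u Hu]]. apply Rnot_lt_le; intro Hlt.
    assert (ts <= t) by (apply Hlb; split; [exact Ht | exists u; exact Hu]).
    destruct (periodic_u_reduce f Hper t u) as [u' [Hu' Eu]]. rewrite Eu in Hu.
    assert (f t u' < c) by (apply Htube; [lra | rewrite Rabs_right; lra | exact Hu']).
    lra. }
  destruct Hattained as [us Hus].
  assert (Htspos : 0 < ts).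
  { destruct Hts0 as [P|P]; [exact P|]. rewrite <- P in Hus. specialize (H0 us). lra. }
  exists ts, us. repeat split; try lra; [|exact Hbelow].
  intro u. apply (slab_continuous_left_le T f ts u c Hf ltac:(lra)).
  intros t Ht. apply Rlt_le, Hbelow, Ht.
Qed.

Definition arc_laplacian (g v : R -> R -> R) (t u : R) : R :=
  Derive (fun u' => Derive (v t) u' / g t u') u / g t u.

Record heat_solution (a T : R) (g v : R -> R -> R) : Prop := {
  heat_periodic : periodic_u v;
  heat_continuous : slab_continuous T v;
  heat_speed_pos : forall t u, 0 < t < T -> 0 < g t u;
  heat_ex_derive : forall t u, 0 < t < T -> ex_derive (v t) u;
  heat_ex_derive_flux : forall t u, 0 < t < T ->
    ex_derive (fun u' => Derive (v t) u' / g t u') u;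
  heat_time_derive : forall t u, 0 < t < T ->
    is_derive (fun s => v s u) t (a * arc_laplacian g v t u) }.

Section MaximumPrinciple.

Variables (a T m : R) (g v : R -> R -> R).
Hypotheses (Ha : 0 <= a) (Hv : heat_solution a T g v) (Hm : forall u, v 0 u <= m).

Lemma heat_sub_linear_bound eps : 0 < eps ->
  forall t u, 0 <= t < T -> v t u - eps * t < m + eps.
Proof.
  intros Heps t0 u0 Ht0. apply Rnot_le_lt; intro Hhit.
  set (w := fun t u => v t u - eps * t).
  destruct (slab_first_hitting T w (m + eps) t0 u0) as [ts [us [Hts [Hus [Hmax Hbelow]]]]].
  - intros t u. unfold w. rewrite (heat_periodic _ _ _ _ Hv). reflexivity.
  - apply slab_continuous_sub_linear, (heat_continuous _ _ _ _ Hv).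
  - intro u. unfold w. specialize (Hm u). lra.
  - exact Ht0.
  - exact Hhit.
  - assert (Hg : 0 < g ts us) by exact (heat_speed_pos _ _ _ _ Hv ts us Hts).
    assert (Hlap : arc_laplacian g v ts us <= 0).
    { unfold arc_laplacian, Rdiv at 1.
      apply Rmult_le_0_r; [| apply Rlt_le, Rinv_0_lt_compat, Hg].
      apply (Derive_flux_nonpos_of_local_max (v ts) (g ts) us 1 Rlt_0_1).
      - intro y. exact (heat_ex_derive _ _ _ _ Hv ts y Hts).
      - intro y. exact (heat_speed_pos _ _ _ _ Hv ts y Hts).
      - exact (heat_ex_derive_flux _ _ _ _ Hv ts us Hts).
      - intros y _. specialize (Hmax y). unfold w in Hmax, Hus. lra. }
    assert (Htime : 0 <= a * arc_laplacian g v ts us - eps).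
    { apply (is_derive_nonneg_of_left_max (fun s => v s us - eps * s) ts _ ts).
      - apply (is_derive_minus (fun s => v s us) (fun s => eps * s)).
        + exact (heat_time_derive _ _ _ _ Hv ts us Hts).
        + auto_derive; [exact I | ring].
      - lra.
      - intros y Hy. specialize (Hbelow y us ltac:(lra)). unfold w in Hbelow, Hus. lra. }
    nra.
Qed.

Theorem heat_max_principle : forall t u, 0 <= t <= T -> v t u <= m.
Proof.
  assert (Hopen : forall t u, 0 <= t < T -> v t u <= m).
  { intros t u Ht. apply Rnot_lt_le; intro Hgt.
    set (eps := (v t u - m) / (2 * (1 + t))).
    assert (Heps : 0 < eps) by (apply Rdiv_lt_0_compat; lra).
    assert (eps * (1 + t) = (v t u - m) / 2) by (unfold eps; field; lra).
    pose proof (heat_sub_linear_bound eps Heps t u Ht). nra. }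
  intros t u Ht. destruct (Rlt_or_le t T) as [Hlt|Hge]; [apply Hopen; lra|].
  replace t with T by lra.
  destruct (Req_dec T 0) as [HT0|HT0]; [rewrite HT0; apply Hm|].
  apply (slab_continuous_left_le T v T u m (heat_continuous _ _ _ _ Hv)); [lra|].
  intros t' Ht'. apply Hopen. exact Ht'.
Qed.

End MaximumPrinciple.

Lemma arc_laplacian_opp g v t u :
  arc_laplacian g (fun t u => - v t u) t u = - arc_laplacian g v t u.
Proof.
  unfold arc_laplacian; cbv beta.
  rewrite (Derive_ext (fun u' => Derive (fun x => - v t x) u' / g t u')
                      (fun u' => - (Derive (v t) u' / g t u'))).
  - rewrite Derive_opp. unfold Rdiv. ring.
  - intro y. rewrite Derive_opp. unfold Rdiv. ring.
Qed.

Lemma heat_solution_opp a T g v :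
  heat_solution a T g v -> heat_solution a T g (fun t u => - v t u).
Proof.
  intros Hv. constructor.
  - intros t u. rewrite (heat_periodic _ _ _ _ Hv). reflexivity.
  - apply slab_continuous_opp, (heat_continuous _ _ _ _ Hv).
  - exact (heat_speed_pos _ _ _ _ Hv).
  - intros t u Ht. exact (ex_derive_opp (v t) u (heat_ex_derive _ _ _ _ Hv t u Ht)).
  - intros t u Ht.
    apply ex_derive_ext with (fun u' => - (Derive (v t) u' / g t u')).
    + intro y. rewrite Derive_opp. unfold Rdiv. apply Ropp_mult_distr_l.
    + exact (ex_derive_opp _ u (heat_ex_derive_flux _ _ _ _ Hv t u Ht)).
  - intros t u Ht. rewrite arc_laplacian_opp.
    replace (a * - arc_laplacian g v t u) with (- (a * arc_laplacian g v t u)) by ring.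
    exact (is_derive_opp _ _ _ (heat_time_derive _ _ _ _ Hv t u Ht)).
Qed.

Corollary heat_min_max_principle a T m M g v : 0 <= a -> heat_solution a T g v ->
  (forall u, m <= v 0 u <= M) -> forall t u, 0 <= t <= T -> m <= v t u <= M.
Proof.
  intros Ha Hv Hinit t u Ht. split.
  - apply Ropp_le_cancel.
    apply (heat_max_principle a T (- m) g (fun t u => - v t u) Ha (heat_solution_opp _ _ _ _ Hv));
      [|exact Ht].
    intro u'. specialize (Hinit u'). lra.
  - apply (heat_max_principle a T M g v Ha Hv); [|exact Ht].
    intro u'. apply Hinit.
Qed.

Lemma framed_flow_angle_heat alpha T gam0 th0 gam th :
  framed_flow_solution alpha T gam0 th0 gam th -> heat_solution alpha T (speed gam) th.
Proof.
  intros (_ & Hper & _ & _ & _ & _ & _ & Hcont & Hspeed & Hreg & Hflow).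
  constructor.
  - exact Hper.
  - exact (cont_on_slab_slab_continuous T th Hcont).
  - intros t u Ht. apply Hspeed. lra.
  - intros t u Ht. apply (Hreg t u Ht).
  - intros t u Ht. apply (Hreg t u Ht).
  - intros t u Ht. apply (Hflow t u Ht).
Qed.

Theorem mainTheorem3 (alpha T : R) (gam0 : R -> vec3) (th0 : R -> R)
    (gam : R -> R -> vec3) (th : R -> R -> R) :
  0 < alpha -> 0 <= T ->
  (forall u, Rabs (th0 u) < PI / 2) ->
  framed_flow_solution alpha T gam0 th0 gam th ->
  forall t u, 0 <= t <= T -> Rabs (th t u) < PI / 2 /\ 0 < cos (th t u).
Proof.
  intros Ha HT Hth0 Hsol.
  pose proof (framed_flow_angle_heat _ _ _ _ _ _ Hsol) as Hheat.
  destruct Hsol as (_ & _ & _ & Hinit & _).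
  destruct (periodic_slice_bounds T th 0 (heat_periodic _ _ _ _ Hheat)
              (heat_continuous _ _ _ _ Hheat) ltac:(lra)) as [um [uM Hbounds]].
  assert (Hlow : - (PI / 2) < th 0 um)
    by (rewrite Hinit; destruct (Rabs_def2 _ _ (Hth0 um)); lra).
  assert (Hhigh : th 0 uM < PI / 2)
    by (rewrite Hinit; destruct (Rabs_def2 _ _ (Hth0 uM)); lra).
  intros t u Ht.
  destruct (heat_min_max_principle alpha T _ _ (speed gam) th ltac:(lra) Hheat Hbounds t u Ht).
  split; [apply Rabs_def1 | apply cos_gt_0]; lra.
Qed.
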